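(* Let $G=(V,E)$ be a finite simple undirected graph with at least $2$ vertices. Then there exists a vertex $u\in V$ such that $C(G[V\setminus\{u\}])\le C(G)$.
   Context: For a vertex $u$ of a graph, $d_u$ is its degree and $T(u)$ the number of triangles containing $u$; the local clustering coefficient is $C(u)=\frac{2T(u)}{d_u(d_u-1)}$ if $d_u>1$ and $C(u)=0$ otherwise. The average clustering coefficient of a graph $H$ with $n\ge1$ vertices is $C(H)=\frac1n\sum_{u\in V(H)}C(u)$ (local coefficients computed in $H$). $G[S]$ denotes the subgraph induced by $S$. *)

(* A finite simple undirected graph is a symmetric, irreflexive
   relation e on a finType T; vertex set V = [set: T]. Induced subgraphs G[S]
   are handled by restricting neighbourhoods to S : {set T}. *)
From HB Require Import structures.
From mathcomp Require Import all_boot all_order all_algebra.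
Set Implicit Arguments. Unset Strict Implicit. Unset Printing Implicit Defensive.
Import Order.TTheory GRing.Theory Num.Theory.

Section Clustering.
Variables (T : finType) (e : rel T).

Definition nbhd (S : {set T}) (u : T) : {set T} := [set v in S | e u v].

Definition deg (S : {set T}) (u : T) : nat := #|nbhd S u|.

Definition tri (S : {set T}) (u : T) : nat :=
  #|[set P : {set T} | (P \subset nbhd S u) && (#|P| == 2)
       & [exists v in P, exists w in P, e v w]]|.

Definition local_cc (S : {set T}) (u : T) : rat :=
  if 1 < deg S u then (2 * (tri S u)%:R / ((deg S u)%:R * ((deg S u)%:R - 1)))%R
  else 0%R.

Definition avg_cc (S : {set T}) : rat :=
  ((#|S|%:R)^-1 * \sum_(u in S) local_cc S u)%R.

End Clustering.

From HB Require Import structures.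
From mathcomp Require Import all_boot all_order all_algebra.
From mathcomp Require Import ring lra.
Import Order.TTheory GRing.Theory Num.Theory.

(* Summing C_{G-u}(w) over all u <> w gives at most (n-1) C_G(w): deleting a
   non-neighbour of w changes nothing, and if w has degree d >= 3 each of its
   T(w) triangles survives the deletion of exactly d-2 of its d neighbours, so
   the neighbours contribute 2(d-2)T(w)/((d-1)(d-2)) = d C_G(w) in total.
   Hence the n graphs G-u have average clustering coefficients summing to at
   most n C(G), and one of them is at most C(G). *)

Lemma exists_le_of_sum_le (R : realDomainType) (I : finType) (F : I -> R) c :
  0 < #|I| -> (\sum_i F i <= #|I|%:R * c)%R -> exists i, (F i <= c)%R.
Proof.
move=> /card_gt0P[i0 _] sumF; have [i Fi | gtF] := pickP (fun i => F i <= c)%R.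
  by exists i.
have : (\sum_(i : I) c < \sum_i F i)%R.
  by apply: ltr_sum => [|i _]; [apply/hasP; exists i0 | rewrite ltNge gtF].
by rewrite sumr_const -mulr_natl ltNge sumF.
Qed.

Section DoubleCounting.
Variables (T : finType) (A : {set T}) (F : {set {set T}}) (k : nat).
Hypothesis F_ksubsets : forall P, P \in F -> (P \subset A) && (#|P| == k).

Lemma sum_card_avoiding :
  \sum_(u in A) #|[set P in F | u \notin P]| = (#|A| - k) * #|F|.
Proof.
rewrite mulnC -sum_nat_const; transitivity (\sum_(P in F) #|A :\: P|).
  under eq_bigr do rewrite -sum1_card big_mkcond.
  rewrite exchange_big [RHS]big_mkcond /=; apply: eq_bigr => P _.
  under eq_bigr do rewrite inE; case: (P \in F) => /=; last exact: big1.
  rewrite -sum1_card big_mkcond [RHS]big_mkcond; apply: eq_bigr => u _.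
  by rewrite !inE; case: (u \in A); case: (u \in P).
apply: eq_bigr => P /F_ksubsets /andP[sPA /eqP cardP].
by rewrite cardsD (setIidPr sPA) cardP.
Qed.

End DoubleCounting.

Section DeleteVertex.
Variables (T : finType) (e : rel T).
Hypothesis e_irr : irreflexive e.

Local Notation N w := (nbhd e [set: T] w).

Definition triangles (S : {set T}) (w : T) : {set {set T}} :=
  [set P : {set T} | (P \subset nbhd e S w) && (#|P| == 2)
       & [exists v in P, exists x in P, e v x]].

Lemma tri_card S w : tri e S w = #|triangles S w|.
Proof. by []. Qed.

Lemma nbhdC1 u w : nbhd e [set~ u] w = N w :\ u.
Proof. by apply/setP=> v; rewrite !inE andbC. Qed.

Lemma local_ccC1_nonadj u w : ~~ e w u ->
  local_cc e [set~ u] w = local_cc e [set: T] w.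
Proof.
move=> nwu; suff N_C1 : nbhd e [set~ u] w = N w by rewrite /local_cc /deg /tri N_C1.
by apply/setP=> v; rewrite !inE; case: eqP => // ->; rewrite (negbTE nwu).
Qed.

Lemma trianglesC1 u w :
  triangles [set~ u] w = [set P in triangles [set: T] w | u \notin P].
Proof.
apply/setP=> P; rewrite !inE nbhdC1 subsetD1.
by case: (P \subset N w); case: (u \in P); rewrite ?andbF ?andbT.
Qed.

Lemma sum_triC1 w :
  \sum_(u in N w) tri e [set~ u] w = (#|N w| - 2) * tri e [set: T] w.
Proof.
under eq_bigr do rewrite tri_card trianglesC1.
by apply: sum_card_avoiding => P; rewrite inE -andbA => /andP[-> /andP[-> _]].
Qed.

Lemma local_cc_ge0 S w : (0 <= local_cc e S w)%R.
Proof.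
rewrite /local_cc; case: ltnP => // deg_gt1.
have deg_ge1 : (1 <= (deg e S w)%:R :> rat)%R by rewrite ler1n ltnW.
by rewrite divr_ge0 ?mulr_ge0 ?ler0n //; lra.
Qed.

Lemma sum_local_ccC1_nbhd w :
  (\sum_(u in N w) local_cc e [set~ u] w <= #|N w|%:R * local_cc e [set: T] w)%R.
Proof.
have degC1 u : u \in N w -> deg e [set~ u] w = #|N w|.-1.
  by move=> Nu; rewrite /deg nbhdC1 (cardsD1 u (N w)) Nu.
have [le_d2 | gt_d2] := leqP #|N w| 2.
  rewrite big1 ?mulr_ge0 ?ler0n ?local_cc_ge0 // => u Nu.
  by rewrite /local_cc degC1 //; case: #|N w| le_d2 => [|[|[|]]].
under eq_bigr => u Nu do rewrite /local_cc (degC1 u Nu); have := sum_triC1 w.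
rewrite /local_cc /deg; case: #|N w| gt_d2 => [|[|[|d]]] // _ /=.
rewrite -mulr_suml -mulr_sumr -natr_sum => ->; rewrite le_eqVlt; apply: predU1l.
rewrite subSS subSS subn0 natrM.
have d_ge0 : (0 <= d%:R :> rat)%R by rewrite ler0n.
by field; apply/and3P; split; lra.
Qed.

Lemma sum_local_ccC1 w :
  (\sum_(u | u != w) local_cc e [set~ u] w <= (#|T|.-1)%:R * local_cc e [set: T] w)%R.
Proof.
have nbhdE u : (u != w) && e w u = (u \in N w).
  by rewrite !inE andb_idl // => ewu; apply: contraTneq ewu => ->; rewrite e_irr.
rewrite -(cardC1 w) mulr_natl -sumr_const (bigID (e w)) [leRHS](bigID (e w)) /=.
apply: lerD; last by apply: ler_sum => u /andP[_ nwu]; rewrite local_ccC1_nonadj.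
rewrite (eq_bigl _ _ nbhdE) [leRHS](eq_bigl _ _ nbhdE) sumr_const -mulr_natl.
exact: sum_local_ccC1_nbhd.
Qed.

Lemma sum_avg_ccC1 : 1 < #|T| ->
  (\sum_u avg_cc e [set~ u] <= #|T|%:R * avg_cc e [set: T])%R.
Proof.
move=> nT; have n1_gt0 : (0 < (#|T|.-1)%:R :> rat)%R by rewrite ltr0n -subn1 subn_gt0.
have n_neq0 : (#|T|%:R != 0 :> rat)%R by rewrite pnatr_eq0 -lt0n ltnW.
rewrite /avg_cc cardsT mulrA mulfV // mul1r.
under eq_bigr do rewrite cardsC1.
rewrite -mulr_sumr -(ler_pM2l n1_gt0) mulrA mulfV ?mul1r ?gt_eqF //.
rewrite (exchange_big_dep xpredT) //= (eq_bigl _ _ (@in_setT T)) mulr_sumr.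
apply: ler_sum => w _.
by rewrite (eq_bigl (fun u => u != w)) ?sum_local_ccC1 // => u; rewrite !inE eq_sym.
Qed.

End DeleteVertex.

Theorem mainTheorem7 (T : finType) (e : rel T)
  (e_sym : symmetric e) (e_irr : irreflexive e) (hV : 2 <= #|T|) :
  exists u : T, (avg_cc e [set~ u] <= avg_cc e [set: T])%R.
Proof.
apply: exists_le_of_sum_le; first exact: ltnW.
exact: sum_avg_ccC1.
Qed.
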